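(* Let $U=U_1\times\cdots\times U_m\subset\mathbb{R}^m_+$ (each $U_i\subseteq\mathbb{R}$) be convex, $C\subseteq\mathbb{R}^m$, $\overline{U}=U\cap C$. Let $f_1:\mathbb{R}^{n_1}\to\mathbb{R}$, $f_2:\mathbb{R}^{n_2}\to\mathbb{R}$ be convex with $f_1(0)=f_2(0)=0$, and for each $i\in[m]$ let $g_i:\mathbb{R}^{n_1}\times\mathbb{R}^{n_2}\to\mathbb{R}$ be concave in $(x,y)$ with $g_i(0,0)\ge0$. For a set $S$ define $$z^{\rm ad}(S)=\inf_{x,\ y:S\to\mathbb{R}^{n_2}}\Big\{f_1(x)+\sup_{u\in S}f_2(y(u)):\ g_i(x,y(u))\ge u_i\ \forall u\in S,\ \forall i\Big\},$$ $$z^{\rm st}(S)=\inf_{x,y}\{f_1(x)+f_2(y):\ g_i(x,y)\ge u_i\ \forall u\in S,\ \forall i\},$$ and $z_{\rm aro}=z^{\rm ad}(U)$, $z_{\rm acp}=z^{\rm ad}(\overline{U})$, $z_{\rm ro}=z^{\rm st}(U)$, $z_{\rm cp}=z^{\rm st}(\overline{U})$. Let $\gamma_{\rm ro}=\gamma(U^\downarrow,\Pi(\overline{U}^\downarrow))$ and $\gamma_{\rm aro}=\gamma(U^\downarrow,\overline{U}^\downarrow)$. If $z_{\rm acp}>0$ and $z_{\rm ro}<\infty$, then $$\frac{z_{\rm cp}}{z_{\rm ro}}\le\gamma_{\rm ro},\qquad\frac{z_{\rm acp}}{z_{\rm aro}}\le\gamma_{\rm aro}.$$ Furthermore, the bounds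 are tight.
   Context: $[m]=\{1,\dots,m\}$. For $S\subseteq\mathbb{R}^m_+$, $S^\downarrow=\{t\in\mathbb{R}^m_+:\exists s\in S,\ t\le s\text{ componentwise}\}$. $\Pi_i(S)$ is the projection of $S$ onto coordinate $i$ and $\Pi(S)=\Pi_1(S)\times\cdots\times\Pi_m(S)$. For $r\ge0$, $rS=\{rx:x\in S\}$; $\gamma(S_1,S_2)=\min\{\gamma\ge0:S_2\subseteq\gamma S_1\}$. *)

From HB Require Import structures.
From mathcomp Require Import all_boot all_order all_algebra.
From mathcomp Require Import classical_sets boolp reals constructive_ereal ereal.
Set Implicit Arguments. Unset Strict Implicit. Unset Printing Implicit Defensive.
Import Order.TTheory GRing.Theory Num.Theory.
Local Open Scope classical_set_scope.
Local Open Scope ring_scope.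

(* Vectors of R^k are row vectors 'rV[R]_k; the i-th coordinate of u is u ord0 i. *)
Section Defs.
Variable R : realType.

Definition prod_set m (Ui : 'I_m -> set R) : set 'rV[R]_m :=
  [set u | forall i, Ui i (u ord0 i)].

Definition orthant m : set 'rV[R]_m := [set u | forall i, 0 <= u ord0 i].

Definition cvx_set m (S : set 'rV[R]_m) :=
  forall u v t, S u -> S v -> 0 <= t <= 1 -> S (t *: u + (1 - t) *: v).

Definition cvx_fun n (f : 'rV[R]_n -> R) :=
  forall x y t, 0 <= t <= 1 -> f (t *: x + (1 - t) *: y) <= t * f x + (1 - t) * f y.

Definition ccv_fun2 n1 n2 (g : 'rV[R]_n1 -> 'rV[R]_n2 -> R) :=
  forall x x' y y' t, 0 <= t <= 1 ->
    t * g x y + (1 - t) * g x' y' <= g (t *: x + (1 - t) *: x') (t *: y + (1 - t) *: y').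

Definition downclosure m (S : set 'rV[R]_m) : set 'rV[R]_m :=
  [set t | (forall i, 0 <= t ord0 i) /\
           exists2 s, S s & forall i, t ord0 i <= s ord0 i].

Definition proj_i m (S : set 'rV[R]_m) (i : 'I_m) : set R :=
  [set s ord0 i | s in S].
Definition proj_box m (S : set 'rV[R]_m) : set 'rV[R]_m :=
  [set t | forall i, proj_i S i (t ord0 i)].

Definition scale_set m (r : R) (S : set 'rV[R]_m) : set 'rV[R]_m :=
  [set r *: x | x in S].

(* gamma(S1,S2) = min{ gamma >= 0 : S2 \subseteq gamma S1 } (taken as an inf in \bar R) *)
Definition gamma m (S1 S2 : set 'rV[R]_m) : \bar R :=
  ereal_inf [set g%:E | g in [set g : R | 0 <= g /\ S2 `<=` scale_set g S1]].

Definition inst_ok m n1 n2 (f1 : 'rV[R]_n1 -> R) (f2 : 'rV[R]_n2 -> R)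
    (g : 'I_m -> 'rV[R]_n1 -> 'rV[R]_n2 -> R) :=
  [/\ cvx_fun f1, cvx_fun f2, f1 0 = 0, f2 0 = 0 &
      forall i, ccv_fun2 (g i) /\ 0 <= g i 0 0].

(* z^ad(S): the adaptive problem, y : S -> R^{n2} (represented as a total function) *)
Definition z_ad m n1 n2 (f1 : 'rV[R]_n1 -> R) (f2 : 'rV[R]_n2 -> R)
    (g : 'I_m -> 'rV[R]_n1 -> 'rV[R]_n2 -> R) (S : set 'rV[R]_m) : \bar R :=
  ereal_inf [set z | exists (x : 'rV[R]_n1) (y : 'rV[R]_m -> 'rV[R]_n2),
     (forall u, S u -> forall i, u ord0 i <= g i x (y u)) /\
     z = ((f1 x)%:E + ereal_sup [set (f2 (y u))%:E | u in S])%E].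

Definition z_st m n1 n2 (f1 : 'rV[R]_n1 -> R) (f2 : 'rV[R]_n2 -> R)
    (g : 'I_m -> 'rV[R]_n1 -> 'rV[R]_n2 -> R) (S : set 'rV[R]_m) : \bar R :=
  ereal_inf [set z | exists (x : 'rV[R]_n1) (y : 'rV[R]_n2),
     (forall u, S u -> forall i, u ord0 i <= g i x y) /\
     z = (f1 x + f2 y)%:E].

End Defs.

From HB Require Import structures.
From mathcomp Require Import all_boot all_order all_algebra.
From mathcomp Require Import classical_sets boolp reals constructive_ereal ereal.
From mathcomp Require Import lra.

Set Implicit Arguments.
Unset Strict Implicit.
Unset Printing Implicit Defensive.
Import Order.TTheory GRing.Theory Num.Theory.
Local Open Scope classical_set_scope.
Local Open Scope ring_scope.

(* If every u in Ubar lies below gamma s for some s in U, then shrinking a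
   (static or adaptive) solution for U by gamma gives a solution for Ubar:
   convexity with f(0) = 0 and concavity with g(0,0) >= 0 give
   f(gamma x) <= gamma f(x) and gamma g(x,y) <= g(gamma x, gamma y).  So
   z(Ubar) <= gamma z(U) for every admissible gamma, which is the bound.
   Since gamma(U^down, Ubar^down) <= gamma(U^down, Pi(Ubar^down)), the static
   bound holds even with the adaptive constant.
   For tightness take f1 = |x|, f2 = 0 and a single binding constraint
   x >= u_k, where k maximises sup Pi_k(Ubar) / sup Pi_k(U): both problems
   then have value sup Pi_k(.), and because U is a product, Pi(Ubar^down)
   fits into (rho + e) U^down for the maximal ratio rho and every e > 0. *)

Section Generic.
Variable R : realType.

Lemma cvx_fun_scale n (f : 'rV[R]_n -> R) x t :
  cvx_fun f -> f 0 = 0 -> 0 <= t <= 1 -> f (t *: x) <= t * f x.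
Proof.
move=> cf f0 t01; have := cf x 0 t t01.
by rewrite f0 mulr0 addr0 scaler0 addr0.
Qed.

Lemma ccv_fun2_scale n1 n2 (h : 'rV[R]_n1 -> 'rV[R]_n2 -> R) x y t :
  ccv_fun2 h -> 0 <= h 0 0 -> 0 <= t <= 1 -> t * h x y <= h (t *: x) (t *: y).
Proof.
move=> ch h0 /[dup] t01 /andP[_ t1]; have := ch x 0 y 0 t t01.
rewrite !scaler0 !addr0 => le; apply: le_trans le; rewrite lerDl.
by apply: mulr_ge0; rewrite // subr_ge0.
Qed.

Lemma le_mule_ereal_inf (A : \bar R) (S : set \bar R) (t : R) : 0 < t ->
  (forall c, S c -> (A <= t%:E * c)%E) -> (A <= t%:E * ereal_inf S)%E.
Proof.
move=> t0 le; rewrite -lee_pdivrMl //; apply: le_ereal_inf_tmp => c Sc.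
by rewrite lee_pdivrMl // le.
Qed.

Lemma ratio_le_ereal_inf (A B : \bar R) (G : set R) :
  (0 < A)%E -> (A <= B)%E -> (B < +oo)%E -> (forall g, G g -> 0 < g) ->
  (forall g, G g -> g < 1 -> (A <= g%:E * B)%E) ->
  ((fine A / fine B)%:E <= ereal_inf [set g%:E | g in G])%E.
Proof.
case: A => [a| |] //; case: B => [b| |] //=; rewrite ?leey ?lte_fin ?lee_fin //.
move=> a0 ab _ G0 le; apply: le_ereal_inf_tmp => _ [g Gg <-].
have b0 : 0 < b by lra.
rewrite lee_fin ler_pdivrMr //; case: (ltP g 1) => [g1|g1].
- by have := le g Gg g1; rewrite -EFinM lee_fin mulrC.
- by have := G0 g Gg; nra.
Qed.

Lemma le_gamma_subset m (S1 S2 S2' : set 'rV[R]_m) :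
  S2 `<=` S2' -> (gamma S1 S2 <= gamma S1 S2')%E.
Proof.
move=> S22'; apply: ereal_inf_le_tmp => _ [t [t0 sub] <-].
by exists t => //; split => // u /S22'/sub.
Qed.

Lemma sub_proj_box m (S : set 'rV[R]_m) : S `<=` proj_box S.
Proof. by move=> u Su i; exists u. Qed.

Definition scaled_below m (t : R) (S T : set 'rV[R]_m) :=
  forall u, S u -> exists2 s, T s & forall i, u ord0 i <= t * s ord0 i.

Lemma scaled_below_downclosure m (t : R) (S T : set 'rV[R]_m) :
  S `<=` @orthant R m -> 0 <= t ->
  downclosure S `<=` scale_set t (downclosure T) -> scaled_below t S T.
Proof.
move=> SO t0 sub u Su; have Su_down : downclosure S u.
  by split; [apply: SO | exists u].
have [w [_ [s Ts ws]] <-] := sub u Su_down.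
by exists s => // i; rewrite mxE ler_wpM2l.
Qed.

Lemma le_sup_proj m (S : set 'rV[R]_m) u i :
  has_ubound (proj_i S i) -> S u -> u ord0 i <= sup (proj_i S i).
Proof.
move=> S_ub Su; apply: sup_upper_bound (ex_intro2 _ _ u Su erefl).
by split=> //; exists (u ord0 i), u.
Qed.

End Generic.

Section Instance.
Variables (R : realType) (m n1 n2 : nat).
Variables (f1 : 'rV[R]_n1 -> R) (f2 : 'rV[R]_n2 -> R).
Variable g : 'I_m -> 'rV[R]_n1 -> 'rV[R]_n2 -> R.
Hypothesis inst : inst_ok f1 f2 g.

Lemma z_ad_le_z_st (S : set 'rV[R]_m) : (z_ad f1 f2 g S <= z_st f1 f2 g S)%E.
Proof.
apply: le_ereal_inf_tmp => _ [x [y [feas ->]]]; apply: ge_ereal_inf.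
exists ((f1 x)%:E + ereal_sup [set (f2 ((fun=> y) u))%:E | u in S])%E.
  by exists x, (fun=> y).
by rewrite EFinD leeD2l //; apply: ge_ereal_sup => _ [u _ <-].
Qed.

Lemma z_st_subset (S T : set 'rV[R]_m) :
  S `<=` T -> (z_st f1 f2 g S <= z_st f1 f2 g T)%E.
Proof.
move=> ST; apply: ereal_inf_le_tmp => _ [x [y [feas ->]]].
by exists x, y; split => // u /ST; apply: feas.
Qed.

Lemma z_ad_subset (S T : set 'rV[R]_m) :
  S `<=` T -> (z_ad f1 f2 g S <= z_ad f1 f2 g T)%E.
Proof.
move=> ST; apply: le_ereal_inf_tmp => _ [x [y [feas ->]]]; apply: ge_ereal_inf.
exists ((f1 x)%:E + ereal_sup [set (f2 (y u))%:E | u in S])%E.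
  by exists x, y; split => // u /ST; apply: feas.
by rewrite leeD2l //; apply: ereal_sup_le => _ [u Su <-]; exists u => //; apply: ST.
Qed.

Lemma z_ad_le0 (S : set 'rV[R]_m) :
  (forall u, S u -> forall i, u ord0 i <= 0) -> (z_ad f1 f2 g S <= 0)%E.
Proof.
case: inst => _ _ f10 f20 hg S0; apply: ge_ereal_inf.
exists ((f1 0)%:E + ereal_sup [set (f2 ((fun=> 0) u))%:E | u in S])%E.
  by exists 0, (fun=> 0); split => // u Su i; apply: le_trans (S0 u Su i) (hg i).2.
by rewrite f10 add0e; apply: ge_ereal_sup => _ [u _ <-]; rewrite f20.
Qed.

Lemma z_ad_gt0_witness (S : set 'rV[R]_m) :
  (0 < z_ad f1 f2 g S)%E -> exists2 u, S u & exists j, 0 < u ord0 j.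
Proof.
move=> z0; apply: contrapT => noPos; move: z0; apply/negP; rewrite -leNgt.
apply: z_ad_le0 => u Su i; rewrite leNgt; apply/negP => ui.
by apply: noPos; exists u => //; exists i.
Qed.

Lemma z_st_scale (t : R) (S T : set 'rV[R]_m) : 0 < t <= 1 ->
  scaled_below t S T -> (z_st f1 f2 g S <= t%:E * z_st f1 f2 g T)%E.
Proof.
case: inst => cf1 cf2 f10 f20 hg /andP[t0 t1] ST.
have t01 : 0 <= t <= 1 by rewrite ltW.
apply: le_mule_ereal_inf => // _ [x [y [feas ->]]]; apply: ge_ereal_inf.
exists (f1 (t *: x) + f2 (t *: y))%:E.
  exists (t *: x), (t *: y); split => // u /ST[s Ts us] i.
  apply: le_trans (us i) _; apply: le_trans (ccv_fun2_scale x y (hg i).1 (hg i).2 t01).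
  by rewrite ler_pM2l // feas.
by rewrite -EFinM lee_fin mulrDr lerD // cvx_fun_scale.
Qed.

Lemma z_ad_scale (t : R) (S T : set 'rV[R]_m) : 0 < t <= 1 ->
  scaled_below t S T -> (z_ad f1 f2 g S <= t%:E * z_ad f1 f2 g T)%E.
Proof.
case: inst => cf1 cf2 f10 f20 hg /andP[t0 t1] ST.
have t01 : 0 <= t <= 1 by rewrite ltW.
have /choice[s hs] : forall u, exists s, S u -> T s /\
    forall i, u ord0 i <= t * s ord0 i.
  move=> u; have [/ST[s Ts us]|nSu] := pselect (S u); first by exists s.
  by exists u => /nSu.
apply: le_mule_ereal_inf => // _ [x [y [feas ->]]]; apply: ge_ereal_inf.
exists ((f1 (t *: x))%:E + ereal_sup [set (f2 (t *: y (s u)))%:E | u in S])%E.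
  exists (t *: x), (fun u => t *: y (s u)); split => // u /hs[Tsu us] i.
  apply: le_trans (us i) _; apply: le_trans (ccv_fun2_scale x _ (hg i).1 (hg i).2 t01).
  by rewrite ler_pM2l // feas.
rewrite muleDr // -EFinM leeD ?lee_fin ?cvx_fun_scale //.
apply: ge_ereal_sup => _ [u /hs[Tsu _] <-].
have le_sup : ((f2 (y (s u)))%:E <= ereal_sup [set (f2 (y u))%:E | u in T])%E.
  by apply: ereal_sup_ubound; exists (s u).
apply: le_trans (lee_wpmul2l _ le_sup); last by rewrite lee_fin ltW.
by rewrite -EFinM lee_fin cvx_fun_scale.
Qed.

Lemma scale_factor_gt0 (t : R) (S T : set 'rV[R]_m) :
  S `<=` @orthant R m -> (0 < z_ad f1 f2 g S)%E -> 0 <= t ->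
  downclosure S `<=` scale_set t (downclosure T) -> 0 < t.
Proof.
move=> SO zS t0 sub; rewrite lt_def t0 andbT; apply: contraTneq zS => t_eq0.
have ST := scaled_below_downclosure SO t0 sub; rewrite -leNgt.
by apply: z_ad_le0 => u /ST[s _ us] i; rewrite (le_trans (us i)) // t_eq0 mul0r.
Qed.

Lemma z_st_ratio_le_gamma (S T : set 'rV[R]_m) :
  S `<=` T -> S `<=` @orthant R m ->
  (0 < z_ad f1 f2 g S)%E -> (z_st f1 f2 g T < +oo)%E ->
  ((fine (z_st f1 f2 g S) / fine (z_st f1 f2 g T))%:E
     <= gamma (downclosure T) (downclosure S))%E.
Proof.
move=> ST SO zS zT; apply: ratio_le_ereal_inf => //.
- exact: lt_le_trans zS (z_ad_le_z_st S).
- exact: z_st_subset.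
- by move=> t [t0 sub]; apply: scale_factor_gt0 zS t0 sub.
- move=> t [t0 sub] t1; apply: z_st_scale; last exact: scaled_below_downclosure.
  by rewrite ltW // (scale_factor_gt0 SO zS t0 sub).
Qed.

Lemma z_ad_ratio_le_gamma (S T : set 'rV[R]_m) :
  S `<=` T -> S `<=` @orthant R m ->
  (0 < z_ad f1 f2 g S)%E -> (z_st f1 f2 g T < +oo)%E ->
  ((fine (z_ad f1 f2 g S) / fine (z_ad f1 f2 g T))%:E
     <= gamma (downclosure T) (downclosure S))%E.
Proof.
move=> ST SO zS zT; apply: ratio_le_ereal_inf => //.
- exact: z_ad_subset.
- exact: le_lt_trans (z_ad_le_z_st T) zT.
- by move=> t [t0 sub]; apply: scale_factor_gt0 zS t0 sub.
- move=> t [t0 sub] t1; apply: z_ad_scale; last exact: scaled_below_downclosure.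
  by rewrite ltW // (scale_factor_gt0 SO zS t0 sub).
Qed.

Lemma z_st_lt_pinfty_ubound (T : set 'rV[R]_m) :
  (z_st f1 f2 g T < +oo)%E -> forall i, has_ubound (proj_i T i).
Proof.
move=> /ereal_inf_lt[_ [x [y [feas _]]] _] i.
by exists (g i x y) => _ [u Tu <-]; apply: feas.
Qed.

End Instance.

Section ProductSets.
Variables (R : realType) (m : nat) (Ui : 'I_m -> set R).

Lemma prod_set_coordinatewise (P : 'I_m -> R -> Prop) :
  (forall i, exists2 v, prod_set Ui v & P i (v ord0 i)) ->
  exists2 w, prod_set Ui w & forall i, P i (w ord0 i).
Proof.
move=> hP; have /choice[v hv] : forall i, exists v, prod_set Ui v /\ P i (v ord0 i).
  by move=> i; have [v Uv Pv] := hP i; exists v.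
by exists (\row_i v i ord0 i) => i; rewrite mxE; [apply: (hv i).1 | apply: (hv i).2].
Qed.

Lemma gamma_prod_set_le (S : set 'rV[R]_m) (r : R) :
  prod_set Ui !=set0 -> prod_set Ui `<=` @orthant R m -> 0 <= r ->
  (forall u i, S u -> u ord0 i <= r * sup (proj_i (prod_set Ui) i)) ->
  (gamma (downclosure (prod_set Ui)) (proj_box (downclosure S)) <= r%:E)%E.
Proof.
move=> [u0 Uu0] UO r0 Sr.
apply/lee_addgt0Pr => e e0; rewrite -EFinD; apply: ereal_inf_lbound.
have re0 : 0 < r + e by rewrite ltr_wpDl.
exists (r + e) => //; split => [|t tS]; first exact: ltW.
exists ((r + e)^-1 *: t); last by rewrite scalerA divff ?scale1r // gt_eqF.
have t_bnd i : 0 <= t ord0 i /\ t ord0 i <= r * sup (proj_i (prod_set Ui) i).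
  have [w [w0 [s Ss ws]] <-] := tS i.
  by split; [apply: w0 | apply: le_trans (ws i) (Sr s i Ss)].
split=> [i|].
  by rewrite mxE; apply: mulr_ge0; [rewrite invr_ge0 ltW | apply: (t_bnd i).1].
apply: (prod_set_coordinatewise (P := fun i x => ((r + e)^-1 *: t) ord0 i <= x)).
move=> i; rewrite mxE; set c := (r + e)^-1 * t ord0 i.
have [lt_sup|ge_sup] := ltP c (sup (proj_i (prod_set Ui) i)).
- have [_ [v Uv <-] lt_v] := sup_gt (ex_intro _ _ (ex_intro2 _ _ u0 Uu0 erefl)) lt_sup.
  by exists v => //; apply: ltW.
- exists u0 => //; apply: le_trans (UO u0 Uu0 i).
  (* (r + e) sup <= t_i <= r sup forces t_i <= 0 *)
  move: ge_sup; rewrite ler_pdivlMl // => ge_sup.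
  have [t0 tr] := t_bnd i; have t_le0 : t ord0 i <= 0 by nra.
  by apply: mulr_ge0_le0; rewrite // invr_ge0 ltW.
Qed.

End ProductSets.

Section TightInstance.
Variables (R : realType) (m : nat).

Definition tight_f1 : 'rV[R]_1 -> R := fun x => `|x ord0 ord0|.
Definition tight_f2 : 'rV[R]_0 -> R := fun=> 0.
Definition tight_g (k : 'I_m) (a : 'I_m -> R) : 'I_m -> 'rV[R]_1 -> 'rV[R]_0 -> R :=
  fun i x _ => if i == k then x ord0 ord0 else a i.

Lemma tight_inst_ok k a :
  (forall i, 0 <= a i) -> inst_ok tight_f1 tight_f2 (tight_g k a).
Proof.
move=> a0; split=> [x y t /andP[t0 t1]|x y t _||//|i].
- rewrite /tight_f1 !mxE; apply: le_trans (ler_normD _ _) _.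
  by rewrite !normrM (ger0_norm t0) (@ger0_norm _ (1 - t)) ?subr_ge0.
- by rewrite /tight_f2 !mulr0 addr0.
- by rewrite /tight_f1 mxE normr0.
- rewrite /tight_g; case: eqP => _; split; rewrite ?mxE //.
  by move=> x x' y y' t _; rewrite !mxE.
  by move=> x x' y y' t _; rewrite -mulrDl addrC subrK mul1r.
Qed.

Lemma tight_instance_value k a (S : set 'rV[R]_m) :
  S !=set0 -> S `<=` @orthant R m -> (forall u, S u -> forall i, u ord0 i <= a i) ->
  z_st tight_f1 tight_f2 (tight_g k a) S = (sup (proj_i S k))%:E /\
  z_ad tight_f1 tight_f2 (tight_g k a) S = (sup (proj_i S k))%:E.
Proof.
move=> [u0 Su0] SO Sa; set b := sup (proj_i S k).
have Sk_ne : proj_i S k !=set0 by exists (u0 ord0 k), u0.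
have Sk_ub : has_ubound (proj_i S k) by exists (a k) => _ [v Sv <-]; apply: Sa.
have b0 : 0 <= b by apply: le_trans (SO u0 Su0 k) (le_sup_proj Sk_ub Su0).
have st_le : (z_st tight_f1 tight_f2 (tight_g k a) S <= b%:E)%E.
  apply: ge_ereal_inf; exists (tight_f1 (const_mx b) + tight_f2 0)%:E.
    exists (const_mx b), 0; split => // u Su i; rewrite /tight_g.
    by case: eqP => [->|_]; rewrite ?mxE ?le_sup_proj ?Sa.
  by rewrite /tight_f1 /tight_f2 mxE addr0 ger0_norm.
have ad_ge : (b%:E <= z_ad tight_f1 tight_f2 (tight_g k a) S)%E.
  apply: le_ereal_inf_tmp => _ [x [y [feas ->]]].
  rewrite -[b]addr0 EFinD leeD //; last by apply: ereal_sup_ubound; exists u0.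
  rewrite lee_fin; apply: ge_sup => // _ [u Su <-].
  by apply: le_trans (feas u Su k) _; rewrite /tight_g eqxx ler_norm.
have := z_ad_le_z_st tight_f1 tight_f2 (tight_g k a) S.
by split; apply/le_anti; rewrite ?st_le ?ad_ge (le_trans ad_ge, le_trans _ st_le).
Qed.

Lemma exists_tight_instance (Ui : 'I_m -> set R) (S : set 'rV[R]_m) u1 j :
  prod_set Ui `<=` @orthant R m -> (forall i, has_ubound (proj_i (prod_set Ui) i)) ->
  S `<=` prod_set Ui -> S u1 -> 0 < u1 ord0 j ->
  let gamma_ro := gamma (downclosure (prod_set Ui)) (proj_box (downclosure S)) in
  exists k a,
    [/\ inst_ok tight_f1 tight_f2 (tight_g k a),
        (0 < z_ad tight_f1 tight_f2 (tight_g k a) S)%E,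
        (z_st tight_f1 tight_f2 (tight_g k a) (prod_set Ui) < +oo)%E,
        (gamma_ro <= (fine (z_st tight_f1 tight_f2 (tight_g k a) S) /
           fine (z_st tight_f1 tight_f2 (tight_g k a) (prod_set Ui)))%:E)%E &
        (gamma_ro <= (fine (z_ad tight_f1 tight_f2 (tight_g k a) S) /
           fine (z_ad tight_f1 tight_f2 (tight_g k a) (prod_set Ui)))%:E)%E].
Proof.
move=> UO U_ub SU Su1 u1j gamma_ro; have Uu1 := SU u1 Su1.
pose a i := sup (proj_i (prod_set Ui) i); pose b i := sup (proj_i S i).
have S_ub i : has_ubound (proj_i S i) := subset_has_ubound (image_subset _ SU) (U_ub i).
have ub_a u i : prod_set Ui u -> u ord0 i <= a i := le_sup_proj (U_ub i).
have ub_b u i : S u -> u ord0 i <= b i := le_sup_proj (S_ub i).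
have b0 i : 0 <= b i := le_trans (UO u1 Uu1 i) (ub_b u1 i Su1).
have ba i : b i <= a i.
  apply: ge_sup => [|_ [u Su <-]]; first by exists (u1 ord0 i), u1.
  exact: ub_a (SU u Su).
pose rho i := b i / a i.
have [k _ rho_max] := arg_maxP rho (i0 := j) (P := xpredT) isT.
have rho_k : 0 < rho k.
  have bj : 0 < b j := lt_le_trans u1j (ub_b u1 j Su1).
  by apply: lt_le_trans (rho_max j isT); rewrite divr_gt0 ?(lt_le_trans bj).
have b_le i : b i <= rho k * a i.
  have [a_eq0|a_neq0] := eqVneq (a i) 0; first by rewrite a_eq0 mulr0 -a_eq0.
  rewrite -(divfK a_neq0 (b i)); apply: ler_wpM2r (rho_max i isT).
  exact: le_trans (b0 i) (ba i).
have [zU_st zU_ad] := tight_instance_value k (a := a) (ex_intro _ u1 Uu1) UO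
  (fun u Uu i => ub_a u i Uu).
have [zS_st zS_ad] := tight_instance_value k (a := a) (ex_intro _ u1 Su1)
  (subset_trans SU UO) (fun u Su i => ub_a u i (SU u Su)).
have gamma_le : (gamma_ro <= (rho k)%:E)%E.
  apply: gamma_prod_set_le (ex_intro _ u1 Uu1) UO (ltW rho_k) _ => u i Su.
  exact: le_trans (ub_b u i Su) (b_le i).
exists k, a; rewrite zS_st zS_ad zU_st zU_ad; split => //.
- by apply: tight_inst_ok => i; apply: le_trans (b0 i) (ba i).
- rewrite lte_fin lt_def b0 andbT; apply: contraTneq rho_k => b_eq0.
  by rewrite /rho /b b_eq0 mul0r ltxx.
- by rewrite ltry.
Qed.

End TightInstance.

Theorem theorem9 (R : realType) (m : nat) (Ui : 'I_m -> set R) (C : set 'rV[R]_m) :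
  let U := prod_set Ui in
  let Ubar := U `&` C in
  let gamma_ro := gamma (downclosure U) (proj_box (downclosure Ubar)) in
  let gamma_aro := gamma (downclosure U) (downclosure Ubar) in
  cvx_set U -> U `<=` @orthant R m ->
  (* the bounds *)
  (forall (n1 n2 : nat) (f1 : 'rV[R]_n1 -> R) (f2 : 'rV[R]_n2 -> R)
          (g : 'I_m -> 'rV[R]_n1 -> 'rV[R]_n2 -> R),
     inst_ok f1 f2 g ->
     (0 < z_ad f1 f2 g Ubar)%E -> (z_st f1 f2 g U < +oo)%E ->
     ((fine (z_st f1 f2 g Ubar) / fine (z_st f1 f2 g U))%:E <= gamma_ro)%E /\
     ((fine (z_ad f1 f2 g Ubar) / fine (z_ad f1 f2 g U))%:E <= gamma_aro)%E)
  /\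
  (* tightness: whenever the setting is non-vacuous for U and C,
     each bound is attained by some instance *)
  ((exists (n1 n2 : nat) (f1 : 'rV[R]_n1 -> R) (f2 : 'rV[R]_n2 -> R)
           (g : 'I_m -> 'rV[R]_n1 -> 'rV[R]_n2 -> R),
      [/\ inst_ok f1 f2 g, (0 < z_ad f1 f2 g Ubar)%E & (z_st f1 f2 g U < +oo)%E]) ->
   (exists (n1 n2 : nat) (f1 : 'rV[R]_n1 -> R) (f2 : 'rV[R]_n2 -> R)
           (g : 'I_m -> 'rV[R]_n1 -> 'rV[R]_n2 -> R),
      [/\ inst_ok f1 f2 g, (0 < z_ad f1 f2 g Ubar)%E, (z_st f1 f2 g U < +oo)%E &
          (fine (z_st f1 f2 g Ubar) / fine (z_st f1 f2 g U))%:E = gamma_ro]) /\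
   (exists (n1 n2 : nat) (f1 : 'rV[R]_n1 -> R) (f2 : 'rV[R]_n2 -> R)
           (g : 'I_m -> 'rV[R]_n1 -> 'rV[R]_n2 -> R),
      [/\ inst_ok f1 f2 g, (0 < z_ad f1 f2 g Ubar)%E, (z_st f1 f2 g U < +oo)%E &
          (fine (z_ad f1 f2 g Ubar) / fine (z_ad f1 f2 g U))%:E = gamma_aro])).
Proof.
move=> U Ubar gamma_ro gamma_aro _ UO.
have UbarU : Ubar `<=` U by move=> u [].
have UbarO : Ubar `<=` orthant (m := m) := subset_trans UbarU UO.
have aro_le_ro : (gamma_aro <= gamma_ro)%E.
  exact: le_gamma_subset (@sub_proj_box R m (downclosure Ubar)).
have bounds n1 n2 (f1 : 'rV[R]_n1 -> R) (f2 : 'rV[R]_n2 -> R) g :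
    inst_ok f1 f2 g -> (0 < z_ad f1 f2 g Ubar)%E -> (z_st f1 f2 g U < +oo)%E ->
    ((fine (z_st f1 f2 g Ubar) / fine (z_st f1 f2 g U))%:E <= gamma_aro)%E /\
    ((fine (z_ad f1 f2 g Ubar) / fine (z_ad f1 f2 g U))%:E <= gamma_aro)%E.
  by move=> io zS zU; split; [apply: z_st_ratio_le_gamma | apply: z_ad_ratio_le_gamma].
split=> [n1 n2 f1 f2 g io zS zU|[n1 [n2 [f1 [f2 [g [io zS zU]]]]]]].
  by have [st ad] := bounds _ _ _ _ _ io zS zU; split => //; apply: le_trans st _.
have [u1 Ubu1 [j u1j]] := z_ad_gt0_witness io zS.
have [k [a [io' zS' zU' ro_le_st ro_le_ad]]] :=
  exists_tight_instance UO (z_st_lt_pinfty_ubound zU) UbarU Ubu1 u1j.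
have [st_le ad_le] := bounds _ _ _ _ _ io' zS' zU'.
split; exists 1%N, 0%N, (@tight_f1 R), (@tight_f2 R), (tight_g k a); split => //.
- by apply: le_anti; rewrite ro_le_st (le_trans st_le).
- by apply: le_anti; rewrite ad_le (le_trans aro_le_ro).
Qed.
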